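(* For $x\in\mathbb X$ let $C_W(x)=1+\sum_{X\Subset\mathbb X:\,\{x\}\subsetneq X}|W(X)-1|\in[1,\infty]$ and $\overline C_W=\sup_{y\in\mathbb X}C_W(y)$. Suppose that, for all $x\in\mathbb X$, \[ |z(x)W(x)|\prod_{X\Subset\mathbb X:\,\{x\}\subsetneq X}\max\{|W(X)|,1\}\le\frac{1}{\overline C_W\,\mathrm e}, \] with the convention $1/\infty=\infty^{-1}=0$. Let $\alpha\equiv\overline C_W^{-1}\le 1$ (constant) and $r\equiv\frac{\alpha}{1+\alpha}\le\frac12$. Then, for all $x\in\mathbb X$, \[ |z(x)|\prod_{\substack{X\Subset\mathbb X:\\ x\in X}}\max\Big\{|W(X)|,\ 1+|W(X)-1|\,\alpha^{|S|}\ \Big|\ \varnothing\neq S\subset X\setminus\{x\}\Big\}\le r . \]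
   Context: $\mathbb X$ is a finite or countably infinite set; $X\Subset\mathbb X$ means $X$ is a finite subset of $\mathbb X$. Fix $z:\mathbb X\to\mathbb C$ and $W:\{X\Subset\mathbb X\}\to\mathbb C$; write $W(x)=W(\{x\})$. In the maximum, the max is over $|W(X)|$ together with all numbers $1+|W(X)-1|\alpha^{|S|}$ for nonempty $S\subset X\setminus\{x\}$ (for $X=\{x\}$ the factor is $|W(x)|$). Products of nonnegative numbers over infinite index sets are understood in $[0,\infty]$. *)

From HB Require Import structures.
From mathcomp Require Import all_boot all_order all_algebra.
From mathcomp Require Import finmap.
From mathcomp Require Import all_classical all_reals.
From mathcomp Require Import all_analysis.
From mathcomp Require Import complex.
Set Implicit Arguments. Unset Strict Implicit. Unset Printing Implicit Defensive.
Import Order.TTheory GRing.Theory Num.Theory.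
Local Open Scope ring_scope.
Local Open Scope fset_scope.
Local Open Scope classical_set_scope.

Section Defs.
Variables (R : realType) (T : countType).
Variables (W : {fset T} -> R[i]).

Definition cabs (u : R[i]) : R := ComplexField.Normc.normc u.

Definition supersets (x : T) : set {fset T} :=
  [set X : {fset T} | x \in X /\ X != [fset x]].

Definition CW (x : T) : \bar R :=
  (1%:E + \esum_(X in supersets x) (cabs (W X - 1))%:E)%E.

Definition CWbar : \bar R := ereal_sup [set CW y | y in [set: T]].

Definition alphaW : R :=
  match CWbar with EFin c => c^-1 | _ => 0 end.

Definition rW : R := alphaW / (1 + alphaW).

Definition boundW : \bar R :=
  match CWbar with EFin c => ((c * expR 1)^-1)%:E | _ => 0%E end.

Definition maxfactor (a : R) (x : T) (X : {fset T}) : R :=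
  \big[Num.max/cabs (W X)]_(S <- fpowerset (X `\ x)%fset | S != fset0)
     (1 + cabs (W X - 1) * a ^+ #|` S|)%R.
End Defs.

(* Product over a (possibly infinite) index set A of factors f i >= 1, in
   [0, ∞]: the supremum of the finite partial products. *)
Definition eprod_ge1 (R : realType) (I : choiceType) (A : set I) (f : I -> R)
  : \bar R :=
  ereal_sup [set ((\prod_(i <- F) f i)%:E)%E | F in [set F : {fset I} | [set` F] `<=` A]].

From HB Require Import structures.
From mathcomp Require Import all_boot all_order all_algebra.
From mathcomp Require Import finmap.
From mathcomp Require Import all_classical all_reals.
From mathcomp Require Import all_analysis.
From mathcomp Require Import complex.
From mathcomp Require Import lra.
Set Implicit Arguments. Unset Strict Implicit. Unset Printing Implicit Defensive.
Import Order.TTheory GRing.Theory Num.Theory.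
Local Open Scope ring_scope.
Local Open Scope fset_scope.
Local Open Scope classical_set_scope.

(* With a := 1 / \bar C_W we have a^|S| <= a, so each factor of the product
   is at most max{|W X|, 1} (1 + a |W X - 1|).  Since 1 + t <= e^t, the extra
   factors multiply to at most exp (a sum |W X - 1|) <= exp (a (\bar C_W - 1))
   = e^(1 - a), so by the hypothesis the left-hand side is at most
   (a / e) e^(1 - a) = a e^(-a) <= a / (1 + a) = r.  If \bar C_W = oo, the
   hypothesis forces |z(x) W(x)| = 0, because the product is at least 1. *)

Lemma cabs_ge0 (R : realType) (u : R[i]) : 0 <= cabs u.
Proof. by case: u => a b; exact: sqrtr_ge0. Qed.

Lemma cabsM (R : realType) (u v : R[i]) : cabs (u * v) = cabs u * cabs v.
Proof. exact: ComplexField.Normc.normcM. Qed.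

Lemma prod1D_le_expR_sum (R : realType) (I : Type) (s : seq I) (f : I -> R) :
  (forall i, 0 <= f i) -> \prod_(i <- s) (1 + f i) <= expR (\sum_(i <- s) f i).
Proof.
move=> f_ge0; elim: s => [|i s IHs]; first by rewrite !big_nil expR0.
rewrite !big_cons expRD; apply: ler_pM => //; first by rewrite addr_ge0.
  by apply: prodr_ge0 => j _; rewrite addr_ge0.
exact: expR_ge1Dx.
Qed.

Lemma mul_expR1_le_divD1 (R : realType) (a : R) : 0 <= a ->
  a / expR 1 * expR (1 - a) <= a / (1 + a).
Proof.
move=> a_ge0; rewrite expRB mulrA -(mulrA a) mulVf ?gt_eqF ?expR_gt0 // mulr1.
rewrite ler_wpM2l // lef_pV2 ?posrE ?expR_gt0 ?ltr_wpDr //.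
exact: expR_ge1Dx.
Qed.

Section FiniteApproximation.
Variables (R : realType) (I : choiceType) (A : set I).

Lemma esum_ge_fset (f : I -> R) (F : {fset I}) : [set` F] `<=` A ->
  ((\sum_(i <- F) f i)%:E <= \esum_(i in A) (f i)%:E)%E.
Proof.
move=> FA; apply: esum_ge; exists [set` F]; first by split=> //; exact: finite_fset.
by rewrite -sumEFin (fsbig_seq _ _ (fset_uniq F)).
Qed.

Lemma eprod_ge1_ge_fset (f : I -> R) (F : {fset I}) : [set` F] `<=` A ->
  ((\prod_(i <- F) f i)%:E <= eprod_ge1 A f)%E.
Proof. by move=> FA; apply: ereal_sup_ubound; exists F. Qed.

Lemma eprod_ge1_ge1 (f : I -> R) : (1 <= eprod_ge1 A f)%E.
Proof.
by apply: le_trans (@eprod_ge1_ge_fset f fset0 _); rewrite ?big_seq_fset0.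
Qed.

Lemma eprod_ge1_le_mul (f g : I -> R) (K : R) : 0 <= K ->
  (forall F : {fset I}, [set` F] `<=` A ->
     \prod_(i <- F) g i <= (\prod_(i <- F) f i) * K) ->
  (eprod_ge1 A g <= eprod_ge1 A f * K%:E)%E.
Proof.
move=> K_ge0 gfK; apply: ge_ereal_sup => _ [F FA <-].
apply: le_trans (_ : (\prod_(i <- F) f i)%:E * K%:E <= _)%E.
  by rewrite -EFinM lee_fin gfK.
by apply: lee_wpmul2r; rewrite ?lee_fin // eprod_ge1_ge_fset.
Qed.

End FiniteApproximation.

Section Weights.
Variables (R : realType) (T : countType) (W : {fset T} -> R[i]).

Lemma CW_ge1 (x : T) : (1 <= CW W x)%E.
Proof. by apply: leeDl; apply: esum_ge0 => X _; rewrite lee_fin cabs_ge0. Qed.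

Lemma CW_le_CWbar (x : T) : (CW W x <= CWbar W)%E.
Proof. by apply: ereal_sup_ubound; exists x. Qed.

Lemma maxfactor_ge0 (a : R) (x : T) (X : {fset T}) : 0 <= maxfactor W a x X.
Proof.
rewrite /maxfactor; elim/big_rec: _ => [|S v _ v_ge0]; first exact: cabs_ge0.
by rewrite le_max v_ge0 orbT.
Qed.

Lemma maxfactor_le (a : R) (x : T) (X : {fset T}) : 0 <= a <= 1 ->
  maxfactor W a x X <= Num.max (cabs (W X)) 1 * (1 + cabs (W X - 1) * a).
Proof.
move=> /andP[a_ge0 a_le1].
have m_ge1 : 1 <= Num.max (cabs (W X)) 1 by rewrite le_max lexx orbT.
have m_geW : cabs (W X) <= Num.max (cabs (W X)) 1 by rewrite le_max lexx.
have ta_ge0 : 0 <= cabs (W X - 1) * a by rewrite mulr_ge0 ?cabs_ge0.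
rewrite /maxfactor; elim/big_rec: _ => [|S v S_neq0 v_le]; first by nra.
rewrite ge_max v_le andbT.
have : (0 < #|` S|)%N by rewrite cardfs_gt0.
case: #|` S| => // n _.
have an_le_a : a ^+ n.+1 <= a.
  by rewrite exprS ler_piMr ?exprn_ge0 ?exprn_ile1.
have : cabs (W X - 1) * a ^+ n.+1 <= cabs (W X - 1) * a.
  by rewrite ler_wpM2l ?cabs_ge0.
nra.
Qed.

Lemma prod_maxfactor_le (a c : R) (x : T) (F : {fset {fset T}}) :
  0 <= a <= 1 -> (CW W x <= c%:E)%E -> [set` F] `<=` supersets x ->
  \prod_(X <- F) maxfactor W a x X <=
    (\prod_(X <- F) Num.max (cabs (W X)) 1) * expR (a * (c - 1)).
Proof.
move=> a01 CWx_le Fx; have /andP[a_ge0 _] := a01.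
have sum_le : \sum_(X <- F) cabs (W X - 1) <= c - 1.
  have := le_trans (leeD2l 1 (esum_ge_fset (fun X => cabs (W X - 1)) Fx)) CWx_le.
  by rewrite -EFinD lee_fin => ?; lra.
apply: le_trans (_ : \prod_(X <- F) (Num.max (cabs (W X)) 1 *
                       (1 + cabs (W X - 1) * a)) <= _).
  by apply: ler_prod => X _; rewrite maxfactor_ge0 maxfactor_le.
rewrite big_split /= ler_wpM2l //.
  by apply: prodr_ge0 => X _; rewrite le_max ler01 orbT.
apply: le_trans (prod1D_le_expR_sum _ _) _ => [X|]; first by rewrite mulr_ge0 ?cabs_ge0.
by rewrite ler_expR -mulr_suml mulrC ler_wpM2l.
Qed.

Lemma eprod_maxfactor_le (a c : R) (x : T) :
  0 <= a <= 1 -> (CW W x <= c%:E)%E ->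
  (eprod_ge1 (supersets x) (maxfactor W a x) <=
     eprod_ge1 (supersets x) (fun X => Num.max (cabs (W X)) 1%R) *
       (expR (a * (c - 1)))%:E)%E.
Proof.
move=> a01 CWx_le; apply: eprod_ge1_le_mul => [|F]; first exact: expR_ge0.
exact: prod_maxfactor_le.
Qed.

End Weights.

Theorem corollary2p2 (R : realType) (T : countType)
    (z : T -> R[i]) (W : {fset T} -> R[i]) :
  (forall x : T,
     ((cabs (z x * W [fset x]))%:E *
        eprod_ge1 (supersets x) (fun X => Num.max (cabs (W X)) 1%R) <= boundW W)%E) ->
  forall x : T,
    ((cabs (z x) * cabs (W [fset x]))%:E *
       eprod_ge1 (supersets x) (maxfactor W (alphaW W) x) <= (rW W)%:E)%E.
Proof.
move=> hyp x; have := hyp x; rewrite cabsM.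
set p := _ * _; have p_ge0 : 0 <= p by rewrite mulr_ge0 ?cabs_ge0.
have CWbar_ge1 := le_trans (CW_ge1 W x) (CW_le_CWbar W x).
have := CW_le_CWbar W x.
rewrite /rW /alphaW /boundW; case: (CWbar W) CWbar_ge1 => [c| |] //.
  rewrite lee_fin => c_ge1 CWx_le p_bound; set a := c^-1.
  have c_gt0 : 0 < c := lt_le_trans ltr01 c_ge1.
  have a01 : 0 <= a <= 1 by rewrite invr_ge0 ltW // invf_le1.
  rewrite invfM -/a in p_bound.
  apply: le_trans (lee_wpmul2l _ (eprod_maxfactor_le a01 CWx_le)) _.
    by rewrite lee_fin.
  rewrite muleA; apply: le_trans (lee_wpmul2r _ p_bound) _; first exact: expR_ge0.
  have -> : a * (c - 1) = 1 - a.
    by rewrite mulrBr mulVf ?mulr1 // gt_eqF.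
  by rewrite -EFinM lee_fin mul_expR1_le_divD1 // invr_ge0 ltW.
move=> _ _ p_bound; have : (p%:E <= 0)%E.
  apply: le_trans p_bound; rewrite -[X in (X <= _)%E]mule1.
  by apply: lee_wpmul2l; rewrite ?lee_fin ?eprod_ge1_ge1.
rewrite lee_fin => p_le0; have -> : p = 0 by apply/eqP; rewrite eq_le p_le0 p_ge0.
by rewrite mul0e mul0r.
Qed.
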